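(* Let $G_1$ and $G_2$ be OPERA DAGs with $G_1\sim G_2$, and let $x,y$ be events contained in both. Then $\mathrm{forklessCause}(x,y)$ holds in $G_1$ if and only if $\mathrm{forklessCause}(x,y)$ holds in $G_2$.
   Context: An OPERA DAG is a finite directed acyclic graph whose vertices are events. Each event $v$ has a creator $cr(v)$ among a fixed finite set of validators. Each validator $i$ has a stake weight $w_i>0$, and $W=\sum_i w_i$. An edge $(u,v)$ means that $u$ references $v$ as a parent, and $u$ is a descendant of $v$ if $v$ is reachable from $u$. For an event $v$, $G[v]$ is the subgraph induced on $v$ together with all its ancestors. $G_1\sim G_2$ means $G_1[v]=G_2[v]$ for every event $v$ in both DAGs. A fork is a pair of distinct events with the same creator, neither of which is an ancestor of the other. A validator is a cheater in a subgraph if that subgraph contains a fork created by it. QUORUM is $Q = 2W/3+1$. $\mathrm{forklessCause}(x,y)$ means: the subgraph $G[x]$ contains no fork created by $cr(y)$, and the non-cheater validators (with respect to $G[x]$) that have an event in $G[x]$ having $y$ as an ancestor-or-self have total weight at least $Q$. The set of validators and their weights are the same for both DAGs. *)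

From mathcomp Require Import all_boot all_order all_algebra.
Set Implicit Arguments. Unset Strict Implicit. Unset Printing Implicit Defensive.
Import Order.TTheory GRing.Theory Num.Theory.
Local Open Scope ring_scope.

(* An OPERA DAG is a finite vertex set, a parent relation (u,v) = "u references
   v as a parent", and a creator map; edges stay inside the vertex set and
   there is no directed cycle. *)
Record opera_dag (Ev V : finType) := OperaDag {
  verts : {set Ev};
  par : rel Ev;
  cr : Ev -> V;
  par_verts : forall u v, par u v -> (u \in verts) && (v \in verts);
  acyclic : forall u v, par u v -> ~~ connect par v u
}.

Section Opera.
Variables (Ev V : finType).
Implicit Types (G : opera_dag Ev V).

(* [anc G u v] : v is an ancestor-or-self of u (v reachable from u). *)
Definition anc G (u v : Ev) : bool := connect (par G) u v.

Definition subV G (v : Ev) : {set Ev} :=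
  [set u | (v \in verts G) && anc G v u].

Definition sub_eq (G1 G2 : opera_dag Ev V) (v : Ev) : Prop :=
  [/\ subV G1 v = subV G2 v,
      {in subV G1 v &, forall a b, par G1 a b = par G2 a b}
    & {in subV G1 v, forall a, cr G1 a = cr G2 a}].

Definition dag_sim (G1 G2 : opera_dag Ev V) : Prop :=
  forall v, v \in verts G1 -> v \in verts G2 -> sub_eq G1 G2 v.

Definition has_fork G (S : {set Ev}) (i : V) : bool :=
  [exists a in S, exists b in S,
     [&& a != b, cr G a == i, cr G b == i, ~~ anc G a b & ~~ anc G b a]].

Variable R : realFieldType.
Variable w : V -> R.

Definition totalW : R := \sum_(i : V) w i.
Definition quorum : R := 2 * totalW / 3 + 1.

Definition forklessCause G (x y : Ev) : Prop :=
  ~~ has_fork G (subV G x) (cr G y) /\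
  quorum <= \sum_(i : V | ~~ has_fork G (subV G x) i &&
                 [exists e in subV G x, (cr G e == i) && anc G e y]) w i.

End Opera.

From mathcomp Require Import all_boot all_order all_algebra.
Local Open Scope ring_scope.

(* Everything forklessCause(x, y) inspects lives in G[x]: its forks, the
   creators of its events, and ancestry from its events, because a path
   starting in the ancestor-closed set G[x] never leaves it.  The only other
   datum, cr(y), is read off G[y].  Both agree in G1 and G2 when G1 ~ G2. *)

Set Implicit Arguments.
Unset Strict Implicit.

Section SubgraphTransfer.
Variables (Ev V : finType).
Implicit Types (G : opera_dag Ev V) (x : Ev).

Lemma subV_par_closed G x a c :
  a \in subV G x -> par G a c -> c \in subV G x.
Proof.
rewrite !inE => /andP[-> x_a] a_c /=.
exact: connect_trans x_a (connect1 a_c).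
Qed.

Lemma sub_eq_sym G1 G2 x : sub_eq G1 G2 x -> sub_eq G2 G1 x.
Proof.
case=> eqS eq_par eq_cr; split => //; rewrite -eqS.
- by move=> a b Ha Hb; rewrite eq_par.
- by move=> a Ha; rewrite eq_cr.
Qed.

Lemma sub_eq_anc_imply G1 G2 x a b :
  sub_eq G1 G2 x -> a \in subV G1 x -> anc G1 a b -> anc G2 a b.
Proof.
case=> _ eq_par _ + /connectP[p path_p ->].
elim: p a path_p => [|c p IHp] a /=; first by rewrite /anc connect0.
case/andP=> a_c path_p Ha.
have Hc := subV_par_closed Ha a_c.
apply: connect_trans (connect1 _) (IHp c path_p Hc).
by rewrite -eq_par.
Qed.

Lemma sub_eq_anc G1 G2 x a b :
  sub_eq G1 G2 x -> a \in subV G1 x -> anc G1 a b = anc G2 a b.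
Proof.
move=> eqG Ha; apply/idP/idP; first exact: sub_eq_anc_imply eqG Ha.
apply: sub_eq_anc_imply (sub_eq_sym eqG) _.
by case: eqG => <-.
Qed.

Lemma sub_eq_has_fork G1 G2 x i :
  sub_eq G1 G2 x -> has_fork G1 (subV G1 x) i = has_fork G2 (subV G2 x) i.
Proof.
move=> eqG; have [eqS _ eq_cr] := eqG.
rewrite /has_fork -eqS; apply: eq_existsb => a; apply: andb_id2l => Ha.
apply: eq_existsb => b; apply: andb_id2l => Hb.
by rewrite !eq_cr // !(sub_eq_anc _ eqG).
Qed.

Lemma sub_eq_observers G1 G2 x y i :
  sub_eq G1 G2 x ->
  [exists e in subV G1 x, (cr G1 e == i) && anc G1 e y] =
  [exists e in subV G2 x, (cr G2 e == i) && anc G2 e y].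
Proof.
move=> eqG; have [eqS _ eq_cr] := eqG.
rewrite -eqS; apply: eq_existsb => e; apply: andb_id2l => He.
by rewrite eq_cr // (sub_eq_anc _ eqG).
Qed.

Lemma dag_sim_cr G1 G2 y :
  dag_sim G1 G2 -> y \in verts G1 -> y \in verts G2 -> cr G1 y = cr G2 y.
Proof.
move=> simG y1 y2; have [_ _ eq_cr] := simG y y1 y2.
by apply: eq_cr; rewrite inE y1 /anc connect0.
Qed.

End SubgraphTransfer.

Theorem mainTheorem2 (Ev V : finType) (R : realFieldType) (w : V -> R)
  (w_pos : forall i, 0 < w i)
  (G1 G2 : opera_dag Ev V) (x y : Ev) :
  dag_sim G1 G2 ->
  x \in verts G1 -> x \in verts G2 ->
  y \in verts G1 -> y \in verts G2 ->
  (forklessCause w G1 x y <-> forklessCause w G2 x y).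
Proof.
move=> simG x1 x2 y1 y2.
have eqGx := simG x x1 x2.
rewrite /forklessCause (dag_sim_cr simG y1 y2) (sub_eq_has_fork _ eqGx).
under eq_bigl => i do rewrite (sub_eq_has_fork _ eqGx) (sub_eq_observers _ _ eqGx).
by [].
Qed.
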